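(* Let $A_1,\dots,A_n$ be games with a common probability measure $dF$, and let $Q$, $S$, $L$ and $T$ be as defined in the context. Then $T$ is closed.
   Context: A game is a pair $A=(a(x),dF(x))$ where $dF$ is a probability measure on $\mathbb{R}$ and $a\ge 0$ is measurable with $0<E^A:=\int a\,dF<\infty$. A real number $r$ is fixed; conventions $\exp(-\infty)=0$, $1/(+\infty)=0$. The price $u_r^A$: put $G^A:=\exp(\int\log a\,dF)/e^r$, $H^A:=1/\int (1/a)\,dF$; if $G^A\le H^A$ then $u_r^A:=G^A$, otherwise $u_r^A:=u$ where $(u,t_u)$, $u>0$, $0<t_u\le1$, is the unique solution of $\exp(\int\log(\frac{a(x)}{u}t_u-t_u+1)dF(x))=e^r$, $\int\frac{a(x)-u}{a(x)t_u-ut_u+u}dF(x)=0$. In particular $u_r^A>0$ for the games considered. For games $A_i=(a_i(x),dF(x))$, $i=1,\dots,n$, write $\sum p_iA_i$ for the game $(\sum p_ia_i(x),dF(x))$. Let $Q=\{(p_i)\in\mathbb{R}^n:p_i\ge0,\sum p_i=1\}$, $S=[0,1]^n$, and for $(t_i)\in S$ let $L((t_i)):=\sup_{(p_i)\in Q}\dfrac{u_r^{\sum_{i=1}^n p_iA_i}}{\sum_{i=1}^n p_i\big(u_r^{A_i}+t_i(E^{A_i}/e^r-u_r^{A_i})\big)}$. Let $T:=\{(t_i)\in S: L((t_i))\le 1\}$. *)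

From HB Require Import structures.
From mathcomp Require Import all_boot all_order all_algebra.
From mathcomp Require Import all_classical all_reals all_analysis.
Set Implicit Arguments.
Unset Strict Implicit.
Unset Printing Implicit Defensive.
Import Order.TTheory GRing.Theory Num.Theory.
Import numFieldNormedType.Exports.
Local Open Scope classical_set_scope.
Local Open Scope ring_scope.

Section Games.
Variable R : realType.
Local Notation mR := (measurableTypeR R).

Definition elog (x : R) : \bar R := if 0 < x then (ln x)%:E else -oo%E.
Definition eexp (x : \bar R) : \bar R :=
  match x with
  | EFin y => (expR y)%:E
  | +oo%E => +oo%E
  | -oo%E => 0%E
  end.
Definition einv (x : R) : \bar R := if 0 < x then (x^-1)%:E else +oo%E.
Definition einvE (x : \bar R) : \bar R :=
  match x with
  | EFin y => (y^-1)%:E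
  | +oo%E => 0%E
  | -oo%E => 0%E
  end.

Variable dF : probability mR R.

Definition Eg (a : R -> R) : R := fine (\int[dF]_x (a x)%:E).

Definition Gg (r : R) (a : R -> R) : \bar R :=
  (eexp (\int[dF]_x elog (a x)) * (expR (- r))%:E)%E.

Definition Hg (a : R -> R) : \bar R := einvE (\int[dF]_x einv (a x)).

(* the integrand (a - u)/(a t - u t + u); the denominator is >= 0 and
   vanishes only if t = 1 and a = 0, where the quotient is -u/0 = -oo *)
Definition ratio_u (u t ax : R) : \bar R :=
  if 0 < ax * t - u * t + u then ((ax - u) / (ax * t - u * t + u))%:E
  else -oo%E.

Definition price_system (r : R) (a : R -> R) (u t : R) : Prop :=
  [/\ 0 < u, 0 < t, t <= 1,
      eexp (\int[dF]_x elog (a x / u * t - t + 1)) = (expR r)%:E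
    & (\int[dF]_x ratio_u u t (a x) = 0)%E].

Definition price (r : R) (a : R -> R) : R :=
  if (Gg r a <= Hg a)%E then fine (Gg r a)
  else [get u | exists t, price_system r a u t].

Definition is_game (a : R -> R) : Prop :=
  [/\ measurable_fun setT a, (forall x, 0 <= a x) &
      (0 < \int[dF]_x (a x)%:E < +oo)%E].

Variable n : nat.
Variable A : 'I_n -> R -> R.

Definition simplexQ : set 'rV[R]_n :=
  [set p | (forall i, 0 <= p ord0 i) /\ \sum_(i < n) p ord0 i = 1].

Definition cubeS : set 'rV[R]_n := [set t | forall i, 0 <= t ord0 i <= 1].

Definition mix (p : 'rV[R]_n) : R -> R := fun x => \sum_(i < n) p ord0 i * A i x.

Definition Lfun (r : R) (t : 'rV[R]_n) : \bar R :=
  ereal_sup [set ((price r (mix p)) /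
     (\sum_(i < n) p ord0 i *
        (price r (A i) + t ord0 i * (Eg (A i) / expR r - price r (A i)))))%:E
   | p in simplexQ].

Definition Tset (r : R) : set 'rV[R]_n := [set t | cubeS t /\ (Lfun r t <= 1)%E].

End Games.

From HB Require Import structures.
From mathcomp Require Import all_boot all_order all_algebra.
From mathcomp Require Import all_classical all_reals all_analysis.
Import Order.TTheory GRing.Theory Num.Theory.
Import numFieldNormedType.Exports.
Local Open Scope classical_set_scope.
Local Open Scope ring_scope.

(* L(t) <= 1 iff every quotient c_p / D_p(t) in the supremum is <= 1, so T is
   the intersection of the cube S with the sets {t | c_p / D_p(t) <= 1}, p in Q,
   where c_p is the price of the mixed game and D_p(t) is affine in t.
   Multiplying by x^2 shows {x | c / x <= 1} = {x | c x <= x^2} (also at x = 0,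
   where c / 0 = 0), a closed set, so each of these sets is closed. *)

Lemma divr_le1E (R : realFieldType) (c x : R) : (c / x <= 1) = (c * x <= x ^+ 2).
Proof.
have [->|x0] := eqVneq x 0; first by rewrite invr0 !mulr0 expr0n ler01 lexx.
have x2_gt0 : 0 < x ^+ 2 by rewrite exprn_even_gt0.
by rewrite -(ler_pM2r x2_gt0) mul1r expr2 mulrA divfK.
Qed.

Lemma closed_divr_le1 (R : realType) (T : topologicalType) (c : R) (g : T -> R) :
  continuous g -> closed [set t | c / g t <= 1].
Proof.
move=> g_cont.
have -> : [set t | c / g t <= 1] =
          g @^-1` ((fun x => x ^+ 2 - c * x) @^-1` [set y | 0 <= y]).
  by apply/seteqP; split => t /=; rewrite divr_le1E subr_ge0.
apply: preimage_closed => [t _|]; first exact: g_cont.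
apply: preimage_closed => [x _|]; last exact: closed_ge.
exact: continuousB (@exprn_continuous R 2 x) (@mulrl_continuous R c x).
Qed.

Lemma closed_ereal_sup_le (R : realType) (T : topologicalType) (I : Type)
    (P : set I) (f : I -> T -> R) (c : R) :
    (forall i, P i -> closed [set t | f i t <= c]) ->
  closed [set t | (ereal_sup [set (f i t)%:E | i in P] <= c%:E)%E].
Proof.
move=> closed_f.
have -> : [set t | (ereal_sup [set (f i t)%:E | i in P] <= c%:E)%E] =
          \bigcap_(i in P) [set t | f i t <= c].
  apply/seteqP; split => t /=.
    move=> sup_le i Pi; suff : ((f i t)%:E <= c%:E)%E by rewrite lee_fin.
    by apply: le_trans sup_le; apply: ereal_sup_ubound; exists i.
  by move=> f_le; apply: ge_ereal_sup => _ [i Pi <-]; rewrite lee_fin f_le.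
exact: closed_bigI.
Qed.

Lemma closed_cubeS (R : realType) (n : nat) : closed (@cubeS R n).
Proof.
have -> : @cubeS R n = \bigcap_(i in [set: 'I_n])
    ((fun t : 'rV[R]_n => t ord0 i) @^-1` ([set x | 0 <= x] `&` [set x | x <= 1])).
  apply/seteqP; split => t /= t01 i; first by move=> _; apply/andP; exact: t01.
  by case: (t01 i I) => /= -> ->.
apply: closed_bigI => i _; apply: preimage_closed => [t _|].
  exact: coord_continuous.
by apply: closedI; [exact: closed_ge | exact: closed_le].
Qed.

Lemma continuous_affine_combination (R : realType) (n : nat) (p u k : 'I_n -> R) :
  continuous (fun t : 'rV[R]_n => \sum_(i < n) p i * (u i + t ord0 i * k i)).
Proof.
apply: (@continuous_big _ _ +%R 0 xpredT add_continuous) => i _ t /=.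
apply: (continuousM (s := fun=> p i) (t := fun x : 'rV[R]_n => u i + x ord0 i * k i)).
  exact: cst_continuous.
apply: (continuousD (f := fun=> u i) (g := fun x : 'rV[R]_n => x ord0 i * k i)).
  exact: cst_continuous.
apply: (continuousM (s := fun x : 'rV[R]_n => x ord0 i) (t := fun=> k i)).
  exact: coord_continuous.
exact: cst_continuous.
Qed.

Theorem lemmaD3 (R : realType) (dF : probability (measurableTypeR R) R)
  (r : R) (n : nat) (A : 'I_n -> R -> R)
  (hA : forall i, is_game dF (A i)) :
  closed (Tset dF A r).
Proof.
apply: closedI; first exact: closed_cubeS.
apply: closed_ereal_sup_le => p _.
exact/closed_divr_le1/continuous_affine_combination.
Qed.
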